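(* Let $\Omega\subset\mathbb{R}^2$ be a bounded domain, $X\subset\overline{\Omega}$ finite with $X\setminus\partial\Omega\subset\mathrm{int}(\mathrm{conv}(X\cap\partial\Omega))$, and $f_X$ a discrete load on $X$. Let $x_1,x_2,x_3\in X$ be colinear with $x_2\in[x_1,x_3]$. Assume $(\mathbf{s},\mathbf{q},\mathbf{r})$ solves $(\mathcal{P}_X)$ and $(\mathbf{u}_1,\mathbf{u}_2,\mathbf{w})$ (together with some slack vectors) solves $(\mathcal{P}_X^* )$, and set $\mathbf{z}=\frac12\mathbf{w}$, identified with the function $z:X\to\mathbb{R}$ that equals $z_i$ at $\chi(i)$ and vanishes on $X\cap\partial\Omega$. Let $k$ be the bar index with $\{\chi_-(k),\chi_+(k)\}=\{x_1,x_3\}$. If $s_k\ne0$, then the points $(x_1,z(x_1)),(x_2,z(x_2)),(x_3,z(x_3))\in\mathbb{R}^3$ are colinear.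
   Context: Discrete setting: $\bar n=\#X$, $n=\#(X\setminus\partial\Omega)$, enumeration $\chi:\{1,\dots,n\}\to X\setminus\partial\Omega$; $m=\bar n(\bar n-1)/2$ and enumeration $k\mapsto\{\chi_-(k),\chi_+(k)\}$ of all unordered pairs of distinct points of $X$. $\mathbf{f}\in\mathbb{R}^n$, $f_i=f_X(\{\chi(i)\})$; $l_k=|\chi_+(k)-\chi_-(k)|$. Vectors $\mathbf{u}_1,\mathbf{u}_2,\mathbf{w}\in\mathbb{R}^n$ are identified with $u:X\to\mathbb{R}^2$, $w:X\to\mathbb{R}$ vanishing on $X\cap\partial\Omega$ ($(u_{1;i},u_{2;i})=u(\chi(i))$, $w_i=w(\chi(i))$). $\mathbf{B}_1,\mathbf{B}_2,\mathbf{D}\in\mathbb{R}^{m\times n}$: $(\mathbf{B}_1\mathbf{u}_1+\mathbf{B}_2\mathbf{u}_2)_k=(u(\chi_+(k))-u(\chi_-(k)))\cdot(\chi_+(k)-\chi_-(k))/l_k$, $(\mathbf{D}\mathbf{w})_k=w(\chi_+(k))-w(\chi_-(k))$. $\mathrm{K}=\{(t_1,t_2,t_3):t_1,t_2\ge0,2t_1t_2\ge t_3^2\}$, applied componentwise as $\mathrm{K}^m$. $(\mathcal{P}_X)$: $\inf\{\mathbf{l}^\top\mathbf{s}+2\mathbf{l}^\top\mathbf{r}:\mathbf{s},\mathbf{r}\in\mathbb{R}^m_+,\mathbf{q}\in\mathbb{R}^m,\mathbf{B}_1^\top\mathbf{s}=\mathbf{B}_2^\top\mathbf{s}=\mathbf{0},\mathbf{D}^\top\mathbf{q}=\mathbf{f},(\mathbf{r},\mathbf{s},\mathbf{q})\in\mathrm{K}^m\}$.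 $(\mathcal{P}_X^* )$: $\sup\{\mathbf{f}^\top\mathbf{w}:\mathbf{t}_2+\mathbf{B}_1\mathbf{u}_1+\mathbf{B}_2\mathbf{u}_2=\mathbf{l},\mathbf{t}_3+\mathbf{D}\mathbf{w}=\mathbf{0},\mathbf{t}_1=2\mathbf{l},(\mathbf{t}_1,\mathbf{t}_2,\mathbf{t}_3)\in\mathrm{K}^m\}$ over $\mathbf{u}_1,\mathbf{u}_2,\mathbf{w}\in\mathbb{R}^n$, $\mathbf{t}_1,\mathbf{t}_2\in\mathbb{R}^m_+$, $\mathbf{t}_3\in\mathbb{R}^m$. *)

From HB Require Import structures.
From mathcomp Require Import all_boot all_order all_algebra.
From mathcomp Require Import all_classical all_reals all_analysis.
Set Implicit Arguments. Unset Strict Implicit. Unset Printing Implicit Defensive.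
Import Order.TTheory GRing.Theory Num.Theory.
Import numFieldNormedType.Exports.
Local Open Scope classical_set_scope.
Local Open Scope ring_scope.

Section Defs.
Variable R : realType.
Notation P2 := (R * R)%type.

Definition bdry (A : set P2) : set P2 := closure A `\` interior A.

Definition bounded_domain (O : set P2) : Prop :=
  O !=set0 /\ open O /\ connected O /\
  exists M : R, forall p, O p -> `|p.1| <= M /\ `|p.2| <= M.

Definition conv (A : set P2) : set P2 :=
  [set p | exists (N : nat) (pts : 'I_N -> P2) (lam : 'I_N -> R),
     (forall i, A (pts i)) /\ (forall i, 0 <= lam i) /\ \sum_i lam i = 1 /\
     p.1 = \sum_i lam i * (pts i).1 /\ p.2 = \sum_i lam i * (pts i).2].

Definition edist (x y : P2) : R := Num.sqrt ((x.1 - y.1) ^+ 2 + (x.2 - y.2) ^+ 2).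

(* The discrete setting: X finite (a seq) in the closure of O with
   X \ bdry O inside int conv (X ∩ bdry O); chi enumerates X \ bdry O
   bijectively by 'I_n; k |-> {chim k, chip k} enumerates bijectively the
   unordered pairs of distinct points of X by 'I_m. *)
Definition admissible_setting (O : set P2) (X : seq P2) (n m : nat)
    (chi : 'I_n -> P2) (chim chip : 'I_m -> P2) : Prop :=
  bounded_domain O /\
  (forall x, x \in X -> closure O x) /\
  (forall x, x \in X -> ~ bdry O x ->
      interior (conv [set y | y \in X /\ bdry O y]) x) /\
  injective chi /\
  (forall i, chi i \in X /\ ~ bdry O (chi i)) /\
  (forall x, x \in X -> ~ bdry O x -> exists i, chi i = x) /\
  (forall k, chim k \in X /\ chip k \in X /\ chim k != chip k) /\
  (forall k k', ((chim k = chim k' /\ chip k = chip k') \/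
                 (chim k = chip k' /\ chip k = chim k')) -> k = k') /\
  (forall x y, x \in X -> y \in X -> x != y ->
     exists k, (chim k = x /\ chip k = y) \/ (chim k = y /\ chip k = x)).

Variables (n m : nat) (chi : 'I_n -> P2) (chim chip : 'I_m -> P2).

Definition lvec : 'cV[R]_m := \col_k edist (chip k) (chim k).

(* identification of v in R^n with the function X -> R vanishing on bdry *)
Definition ext (v : 'cV[R]_n) (x : P2) : R := \sum_i (chi i == x)%:R * v i 0.

(* the matrices B1, B2, D written entrywise:
   (B1 u1 + B2 u2)_k = (u(chip k) - u(chim k)) . (chip k - chim k) / l_k,
   (D w)_k = w(chip k) - w(chim k). *)
Definition Dmx : 'M[R]_(m, n) :=
  \matrix_(k, i) ((chi i == chip k)%:R - (chi i == chim k)%:R).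
Definition B1mx : 'M[R]_(m, n) :=
  \matrix_(k, i) (((chi i == chip k)%:R - (chi i == chim k)%:R) *
                   ((chip k).1 - (chim k).1) / lvec k 0).
Definition B2mx : 'M[R]_(m, n) :=
  \matrix_(k, i) (((chi i == chip k)%:R - (chi i == chim k)%:R) *
                   ((chip k).2 - (chim k).2) / lvec k 0).

Definition inK (t1 t2 t3 : R) : Prop := 0 <= t1 /\ 0 <= t2 /\ t3 ^+ 2 <= 2 * t1 * t2.

Variable f : 'cV[R]_n.

Definition PX_feasible (s q r : 'cV[R]_m) : Prop :=
  (forall k, 0 <= s k 0) /\ (forall k, 0 <= r k 0) /\
  B1mx^T *m s = 0 /\ B2mx^T *m s = 0 /\ Dmx^T *m q = f /\
  (forall k, inK (r k 0) (s k 0) (q k 0)).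

Definition PX_obj (s r : 'cV[R]_m) : R :=
  \sum_k lvec k 0 * s k 0 + 2 * \sum_k lvec k 0 * r k 0.

Definition PX_solves (s q r : 'cV[R]_m) : Prop :=
  PX_feasible s q r /\
  forall s1 q1 r1, PX_feasible s1 q1 r1 -> PX_obj s r <= PX_obj s1 r1.

Definition PXd_feasible (u1 u2 w : 'cV[R]_n) (t1 t2 t3 : 'cV[R]_m) : Prop :=
  (forall k, 0 <= t1 k 0) /\ (forall k, 0 <= t2 k 0) /\
  t2 + B1mx *m u1 + B2mx *m u2 = lvec /\
  t3 + Dmx *m w = 0 /\
  t1 = 2 *: lvec /\
  (forall k, inK (t1 k 0) (t2 k 0) (t3 k 0)).

Definition PXd_obj (w : 'cV[R]_n) : R := \sum_i f i 0 * w i 0.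

Definition PXd_solves (u1 u2 w : 'cV[R]_n) : Prop :=
  (exists t1 t2 t3, PXd_feasible u1 u2 w t1 t2 t3) /\
  forall v1 v2 w1 e1 e2 e3, PXd_feasible v1 v2 w1 e1 e2 e3 ->
    PXd_obj w1 <= PXd_obj w.

End Defs.

Definition lift3 {R : realType} (x : (R * R)%type) (h : R) : 'rV[R]_3 :=
  \row_(j < 3) [:: x.1; x.2; h]`_j.

Definition collinear3 {R : realType} (a b c : 'rV[R]_3) : Prop :=
  exists (p d : 'rV[R]_3) (ta tb tc : R),
    a = p + ta *: d /\ b = p + tb *: d /\ c = p + tc *: d.

From Pilot Require Import Defs.
From HB Require Import structures.
From mathcomp Require Import all_boot all_order all_algebra.
From mathcomp Require Import all_classical all_reals all_analysis.
From mathcomp Require Import ring lra.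
Import Order.TTheory GRing.Theory Num.Theory.
Set Implicit Arguments. Unset Strict Implicit.
Local Open Scope ring_scope.

(* In the variables x = (u1, u2, w), the dual (P_X^* ) maximises a linear form
   under the concave quadratic constraints 4 l_k t2_k - t3_k^2 >= 0, and x = 0
   is a Slater point.  Gordan's alternative (proved by Fourier-Motzkin
   elimination) gives Karush-Kuhn-Tucker multipliers nu at the dual optimum,
   and (4 nu l, -2 nu t3, nu t3^2 / 2l) is a primal feasible point with the
   dual optimal value.  Hence the duality gap, a sum of pairings of points of
   the self-dual cone K, vanishes term by term, and s_k > 0 forces the k-th
   dual cone constraint to be tight.  Written with z = w / 2, the k-th slack
   is 4 * bar_gap (chim k) (chip k), a quadratic quantity that is nonnegative
   on all pairs of points of X; since
     ((1-t)(z2-z1) - t(z3-z2))^2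
       = t(1-t) gap13 - (1-t) gap12 - t gap23   for x2 = (1-t) x1 + t x3,
   gap13 = 0 forces z to be affine on [x1, x3]. *)

(** * Gordan's alternative *)

Lemma exists_between (R : realFieldType) (I J : finType) (P : pred I) (Q : pred J)
    (x : I -> R) (y : J -> R) :
  (forall i j, P i -> Q j -> x i < y j) ->
  exists z, (forall i, P i -> x i < z) /\ (forall j, Q j -> z < y j).
Proof.
move=> lt_xy.
have [i0 Pi0|noP] := pickP P; have [j0 Qj0|noQ] := pickP Q.
- case: (arg_maxP x Pi0) => i Pi maxi; case: (arg_minP y Qj0) => j Qj minj.
  exists ((x i + y j) / 2); have := lt_xy i j Pi Qj.
  by split=> [i' /maxi /= | j' /minj /=]; lra.
- case: (arg_maxP x Pi0) => i Pi maxi.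
  by exists (x i + 1); split=> [i' /maxi /= | j]; [lra | rewrite noQ].
- case: (arg_minP y Qj0) => j Qj minj.
  by exists (y j - 1); split=> [i | j' /minj /=]; [rewrite noP | lra].
- by exists 0; split=> [i | j]; rewrite ?noP ?noQ.
Qed.

Section FourierMotzkin.
Variables (R : realFieldType) (C : finType).

Definition dotS (S : {set C}) (a d : C -> R) : R := \sum_(j in S) a j * d j.

Section Elimination.
Variables (S : {set C}) (j0 : C) (I : finType) (P : pred I) (a : I -> C -> R).
Local Notation p i := (a i j0).

(* One elimination step of coordinate j0: keep the rows with no j0-component
   and combine every row with a positive one with every row with a negative
   one so that j0 cancels. *)
Definition fm_pred (t : I + I * I) : bool :=
  match t with
  | inl i => P i && (p i == 0)
  | inr (i, i') => [&& P i, 0 < p i, P i' & p i' < 0]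
  end.

Definition fm_comb (G : I -> R) (t : I + I * I) : R :=
  match t with inl i => G i | inr (i, i') => - p i' * G i + p i * G i' end.

Definition fm_vec (t : I + I * I) (j : C) : R := fm_comb (a^~ j) t.

Lemma dotS_fm_vec T t d : dotS T (fm_vec t) d = fm_comb (fun i => dotS T (a i) d) t.
Proof.
case: t => [i|[i i']] //=; rewrite /dotS !mulr_sumr -big_split /=.
by apply: eq_bigr => j _; rewrite /fm_vec /=; ring.
Qed.

Lemma fm_direction : j0 \in S ->
  (exists d, forall t, fm_pred t -> 0 < dotS (S :\ j0) (fm_vec t) d) ->
  exists d, forall i, P i -> 0 < dotS S (a i) d.
Proof.
move=> Sj0 [d fm_d]; pose D i := dotS (S :\ j0) (a i) d.
have [|z [lt_z gt_z]] := exists_between (P := fun i => P i && (0 < p i))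
    (Q := fun i => P i && (p i < 0)) (x := fun i => - D i / p i)
    (y := fun i => D i / - p i).
  move=> i i' /andP[Pi pi_gt0] /andP[Pi' pi'_lt0].
  have := fm_d (inr (i, i')); rewrite dotS_fm_vec /= Pi Pi' pi_gt0 pi'_lt0.
  move=> /(_ isT) comb_gt0; have npi'_gt0 : 0 < - p i' by rewrite oppr_gt0.
  by rewrite ltr_pdivrMr // mulrAC ltr_pdivlMr // /D; nra.
exists (fun j => if j == j0 then z else d j) => i Pi.
have -> : dotS S (a i) (fun j => if j == j0 then z else d j) = D i + p i * z.
  rewrite /dotS (big_setD1 _ Sj0) /= eqxx addrC; congr (_ + _).
  by apply: eq_bigr => j; rewrite in_setD1 => /andP[/negPf ->].
case: (ltrgtP (p i) 0) => [pi_lt0|pi_gt0|pi0].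
- have := gt_z i; rewrite Pi pi_lt0 => /(_ isT).
  by rewrite ltr_pdivlMr ?oppr_gt0 // /D; nra.
- have := lt_z i; rewrite Pi pi_gt0 => /(_ isT).
  by rewrite ltr_pdivrMr // /D; nra.
- have := fm_d (inl i); rewrite dotS_fm_vec /= Pi pi0 eqxx => /(_ isT).
  by rewrite mul0r addr0.
Qed.

Variable lam' : I + I * I -> R.
Let nu t := if fm_pred t then lam' t else 0.

(* A combined row (i, i') hands its multiplier to both rows i and i'. *)
Definition fm_lift (i : I) : R :=
  nu (inl i) + \sum_i' (nu (inr (i, i')) * - p i' + nu (inr (i', i)) * p i').

Lemma sum_fm_lift (G : I -> R) :
  \sum_(i | P i) fm_lift i * G i = \sum_(t | fm_pred t) lam' t * fm_comb G t.
Proof.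
have lift_out i : ~~ P i -> fm_lift i = 0.
  move=> /negPf nPi; rewrite /fm_lift /nu /= nPi add0r big1 // => i' _.
  by rewrite !andbA andbF !mul0r addr0.
transitivity (\sum_i nu (inl i) * G i +
    \sum_i \sum_i' nu (inr (i, i')) * fm_comb G (inr (i, i'))); last first.
  rewrite [RHS]big_mkcond big_sumType pair_bigA /=.
  congr (_ + _); [apply: eq_bigr => i _ | apply: eq_bigr => -[i i'] _];
  by rewrite /nu /=; case: ifP; rewrite ?mul0r.
rewrite big_mkcond /= (eq_bigr (fun i => fm_lift i * G i)); last first.
  by move=> i _; case: ifP => // /negbT /lift_out ->; rewrite mul0r.
rewrite /fm_lift; under eq_bigr do rewrite mulrDl.
rewrite big_split /=; congr (_ + _).
under eq_bigr do rewrite mulr_suml (eq_bigr _ (fun i' _ => mulrDl _ _ _)) big_split /=.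
rewrite big_split /= [X in _ + X]exchange_big /= -big_split /=.
by apply: eq_bigr => i _; rewrite -big_split; apply: eq_bigr => i' _ /=; ring.
Qed.

Lemma fm_multiplier : j0 \in S -> (forall t, 0 <= lam' t) ->
  (exists2 t, fm_pred t & 0 < lam' t) ->
  (forall j, j \in S :\ j0 -> \sum_(t | fm_pred t) lam' t * fm_vec t j = 0) ->
  [/\ forall i, 0 <= fm_lift i, exists2 i, P i & 0 < fm_lift i &
      forall j, j \in S -> \sum_(i | P i) fm_lift i * a i j = 0].
Proof.
move=> Sj0 lam'_ge0 [t pt lam't_gt0] lam'_S.
have nu_ge0 t' : 0 <= nu t' by rewrite /nu; case: ifP.
have nu_pos_ge0 i i' : 0 <= nu (inr (i, i')) * - p i'.
  rewrite /nu /=; case: ifP; rewrite ?mul0r // => /and4P[_ _ _ /ltW pi'_le0].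
  by rewrite mulr_ge0 ?oppr_ge0.
have nu_neg_ge0 i i' : 0 <= nu (inr (i', i)) * p i'.
  rewrite /nu /=; case: ifP; rewrite ?mul0r // => /and4P[_ /ltW pi'_ge0 _ _].
  by rewrite mulr_ge0.
have sum_ge0 i (Q : pred I) :
    0 <= \sum_(i' | Q i') (nu (inr (i, i')) * - p i' + nu (inr (i', i)) * p i').
  by apply: sumr_ge0 => i' _; apply: addr_ge0.
split.
- by move=> i; apply: addr_ge0.
- case: t pt lam't_gt0 => [i|[i i']] /= pt lt_gt0.
    exists i; first by case/andP: pt.
    by rewrite /fm_lift {1}/nu /= pt; have := sum_ge0 i predT; lra.
  have [Pi pi_gt0 Pi' pi'_lt0] := and4P pt.
  have nu_ii' : nu (inr (i, i')) = lam' (inr (i, i')) by rewrite /nu /= pt.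
  exists i => //; rewrite /fm_lift (bigD1 i') //= nu_ii'.
  have : 0 < lam' (inr (i, i')) * - p i' by rewrite mulr_gt0 ?oppr_gt0.
  have := nu_ge0 (inl i); have := nu_neg_ge0 i i'; have := sum_ge0 i (predC1 i').
  lra.
- move=> j Sj; rewrite sum_fm_lift.
  have [->|neq] := eqVneq j j0; last by apply: lam'_S; rewrite in_setD1 neq.
  apply: big1 => -[i|[i i']] /=; first by case/andP=> _ /eqP ->; rewrite mulr0.
  by move=> _; rewrite mulNr [p i * _]mulrC addNr mulr0.
Qed.

End Elimination.

Theorem gordan (S : {set C}) (I : finType) (P : pred I) (a : I -> C -> R) :
  ~ (exists d, forall i, P i -> 0 < dotS S (a i) d) ->
  exists lam : I -> R, [/\ forall i, 0 <= lam i, exists2 i, P i & 0 < lam i &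
      forall j, j \in S -> \sum_(i | P i) lam i * a i j = 0].
Proof.
have [N] := ubnP #|S|; elim: N => // N IH in S I P a *; rewrite ltnS => leSN no_dir.
case: (set_0Vmem S) => [S0 | [j0 Sj0]].
  have [i Pi|noP] := pickP P; last by case: no_dir; exists (fun=> 0) => i; rewrite noP.
  by exists (fun=> 1); split=> // [|j]; [exists i | rewrite S0 inE].
case: (IH (S :\ j0) _ (fm_pred j0 P a) (fm_vec j0 a)) =>
  [||lam' [lam'_ge0 lam'_pos lam'_S]].
- by move: leSN; rewrite (cardsD1 j0) Sj0.
- by move/(fm_direction Sj0).
- by exists (fm_lift j0 P a lam'); apply: fm_multiplier.
Qed.

End FourierMotzkin.

Lemma big_option (R : Type) (idx : R) (op : Monoid.law idx) (T : finType)
    (F : option T -> R) :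
  \big[op/idx]_o F o = op (F None) (\big[op/idx]_t F (Some t)).
Proof.
by rewrite ![index_enum _]unlock [@Finite.enum in LHS]unlock /= big_cons big_map.
Qed.

(** * Karush-Kuhn-Tucker conditions for concave quadratic constraints *)

Section SmallSteps.
Variable R : realFieldType.

Lemma quadratic_ge0_near0 (h g e : R) : 0 <= h -> (h = 0 -> 0 < g) -> 0 <= e ->
  exists2 t0, 0 < t0 & forall t, 0 < t <= t0 -> 0 <= h + t * g - t ^+ 2 * e.
Proof.
move=> h_ge0 g_gt0 e_ge0; have [h_gt0|h0] := ltrP 0 h.
  have den_gt0 : 0 < `|g| + e + h by rewrite ltr_pwDr // addr_ge0.
  exists (h / (`|g| + e + h)) => [|t /andP[t_gt0]]; first exact: divr_gt0.
  rewrite ler_pdivlMr // => le_t; have : - g <= `|g| by rewrite -normrN ler_norm.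
  have t_le1 : t <= 1 by have := normr_ge0 g; nra.
  have : 0 <= t * e by rewrite mulr_ge0 // ltW.
  rewrite expr2; nra.
have {}h0 : h = 0 by apply/eqP; rewrite eq_le h0.
have := g_gt0 h0; rewrite h0 => {}g_gt0.
exists (g / (e + 1)) => [|t /andP[t_gt0]]; first by rewrite divr_gt0 // ltr_pwDr.
rewrite ler_pdivlMr ?ltr_pwDr // => le_t; rewrite expr2; nra.
Qed.

Lemma exists_small_uniform (I : finType) (Q : I -> R -> Prop) :
  (forall i, exists2 t0, 0 < t0 & forall t, 0 < t <= t0 -> Q i t) ->
  exists2 t, 0 < t & forall i, Q i t.
Proof.
move=> small; have /fin_all_exists[t0 t0P] : forall i, exists t0,
    0 < t0 /\ forall t, 0 < t <= t0 -> Q i t.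
  by move=> i; have [t0 ? ?] := small i; exists t0.
have inv_ge0 i : 0 <= (t0 i)^-1 by rewrite invr_ge0 ltW //; case: (t0P i).
have sum_gt0 : 0 < 1 + \sum_i (t0 i)^-1 by rewrite ltr_pwDl // sumr_ge0.
exists (1 + \sum_i (t0 i)^-1)^-1 => [|i]; first by rewrite invr_gt0.
have [t0_gt0 t0Q] := t0P i; apply: t0Q; rewrite invr_gt0 sum_gt0 /=.
rewrite -[t0 i]invrK lef_pV2 ?posrE ?invr_gt0 // (bigD1 i) //= addrCA ler_wpDr //.
by rewrite addr_ge0 // sumr_ge0.
Qed.

End SmallSteps.

Lemma sum_mul_mulmx (R : comPzRingType) (p q : nat) (M : 'M[R]_(p, q))
    (v : 'cV[R]_p) (u : 'cV[R]_q) :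
  \sum_k v k 0 * (M *m u) k 0 = \sum_i (M^T *m v) i 0 * u i 0.
Proof.
under eq_bigr do rewrite mxE mulr_sumr.
rewrite exchange_big /=; apply: eq_bigr => i _; rewrite mxE mulr_suml.
by apply: eq_bigr => k _; rewrite !mxE mulrCA mulrA.
Qed.

Section ConcaveQuadraticKKT.
Variables (R : realFieldType) (K N : nat).
Variables (a0 b0 : 'cV[R]_K) (A B : 'M[R]_(K, N)) (c : 'cV[R]_N).

Definition qslack (x : 'cV[R]_N) (k : 'I_K) : R :=
  (a0 + A *m x) k 0 - (b0 + B *m x) k 0 ^+ 2.

Definition qgrad (x : 'cV[R]_N) : 'M[R]_(K, N) :=
  A - diag_mx (2 *: (b0 + B *m x)^T) *m B.

Lemma qgrad_mul x (d : 'cV[R]_N) k :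
  (qgrad x *m d) k 0 = (A *m d) k 0 - 2 * (b0 + B *m x) k 0 * (B *m d) k 0.
Proof. by rewrite mulmxBl -mulmxA mul_diag_mx !mxE. Qed.

Lemma tr_qgrad_mul x (nu : 'cV[R]_K) :
  (qgrad x)^T *m nu = A^T *m nu - B^T *m \col_k (2 * (b0 + B *m x) k 0 * nu k 0).
Proof.
rewrite /qgrad linearB /= trmx_mul tr_diag_mx mulmxBl -mulmxA mul_diag_mx.
by congr (_ - _ *m _); apply/colP => k; rewrite !mxE.
Qed.

Lemma qslack_step x (d : 'cV[R]_N) t k :
  qslack (x + t *: d) k =
  qslack x k + t * (qgrad x *m d) k 0 - t ^+ 2 * (B *m d) k 0 ^+ 2.
Proof. by rewrite qgrad_mul /qslack !mulmxDr -!scalemxAr !mxE; ring. Qed.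

Lemma qslack_improve x (d : 'cV[R]_N) : (forall k, 0 <= qslack x k) ->
  (forall k, qslack x k = 0 -> 0 < (qgrad x *m d) k 0) ->
  exists2 t, 0 < t & forall k, 0 <= qslack (x + t *: d) k.
Proof.
move=> x_feas d_inc; apply: exists_small_uniform => k.
have [t0 t0_gt0 t0P] :=
  quadratic_ge0_near0 (x_feas k) (d_inc k) (sqr_ge0 ((B *m d) k 0)).
by exists t0 => // t /t0P; rewrite qslack_step.
Qed.

Lemma qslack_no_ascent x (d : 'cV[R]_N) : (forall k, 0 <= qslack x k) ->
  (forall y, (forall k, 0 <= qslack y k) -> (c^T *m y) 0 0 <= (c^T *m x) 0 0) ->
  (forall k, qslack x k = 0 -> 0 < (qgrad x *m d) k 0) -> (c^T *m d) 0 0 <= 0.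
Proof.
move=> x_feas x_opt d_inc; have [t t_gt0 feas] := qslack_improve x_feas d_inc.
have := x_opt _ feas.
have -> : (c^T *m (x + t *: d)) 0 0 = (c^T *m x) 0 0 + t * (c^T *m d) 0 0.
  by rewrite mulmxDr -scalemxAr !mxE.
by rewrite -subr_le0 addrAC subrr add0r pmulr_rle0.
Qed.

Lemma qgrad_slater x xs (mu : 'cV[R]_K) : (forall k, 0 < qslack xs k) ->
  (forall k, 0 <= mu k 0) -> (forall k, mu k 0 * qslack x k = 0) ->
  (qgrad x)^T *m mu = 0 -> mu = 0.
Proof.
move=> slater mu_ge0 mu_cs grad0; pose d := xs - x.
have slack_le k : mu k 0 * qslack xs k <= mu k 0 * (qgrad x *m d) k 0.
  have := qslack_step x d 1 k; rewrite scale1r addrC subrK expr1n !mul1r => ->.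
  rewrite !mulrBr mulrDr mu_cs add0r ler_wnDr // oppr_le0.
  by rewrite mulr_ge0 ?sqr_ge0.
have term_ge0 k : 0 <= mu k 0 * qslack xs k by rewrite mulr_ge0 // ltW.
have sum0 : \sum_k mu k 0 * qslack xs k = 0.
  apply/eqP; rewrite eq_le sumr_ge0 => [|k _]; last exact: term_ge0.
  rewrite andbT (le_trans (ler_sum _ (fun k _ => slack_le k))) // sum_mul_mulmx grad0.
  by rewrite big1 // => i _; rewrite mxE mul0r.
apply/colP => k; rewrite [RHS]mxE.
have /eqP := psumr_eq0P (fun k _ => term_ge0 k) sum0 (i := k) isT.
by rewrite mulf_eq0 (gt_eqF (slater k)) orbF => /eqP.
Qed.

Theorem concave_quadratic_kkt (x xs : 'cV[R]_N) :
  (forall k, 0 < qslack xs k) -> (forall k, 0 <= qslack x k) ->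
  (forall y, (forall k, 0 <= qslack y k) -> (c^T *m y) 0 0 <= (c^T *m x) 0 0) ->
  exists2 nu : 'cV[R]_K, (forall k, 0 <= nu k 0 /\ nu k 0 * qslack x k = 0) &
    c + (qgrad x)^T *m nu = 0.
Proof.
move=> slater x_feas x_opt.
(* Gordan's alternative for the objective and the active gradients gives Fritz
   John multipliers; Slater's condition makes the objective multiplier positive. *)
pose P o := if o is Some k then qslack x k == 0 else true.
pose g o j := if o is Some k then qgrad x k j else c j 0.
have dot_g o d : dotS [set: 'I_N] (g o) d = if o is Some k
    then (qgrad x *m \col_j d j) k 0 else (c^T *m \col_j d j) 0 0.
  rewrite /dotS (eq_bigl xpredT) => [|j]; last by rewrite inE.
  rewrite /g; case: o => [k|]; rewrite mxE; apply: eq_bigr => j _;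
  by rewrite ?[c^T _ _]mxE [(\col_j d j) _ _]mxE.
have no_dir : ~ exists d, forall o, P o -> 0 < dotS [set: 'I_N] (g o) d.
  move=> [d dP]; have := dP None isT.
  rewrite dot_g ltNge (qslack_no_ascent (d := \col_j d j) x_feas x_opt) //.
  by move=> k /eqP k_act; have := dP (Some k); rewrite dot_g; apply.
have [lam [lam_ge0 [i0 Pi0 lam_i0_gt0] lam_stat]] := gordan no_dir.
pose mu := \col_k (if qslack x k == 0 then lam (Some k) else 0).
have stat : lam None *: c + (qgrad x)^T *m mu = 0.
  apply/colP => j; rewrite [RHS]mxE; apply: etrans (lam_stat j (finset.in_setT j)).
  rewrite big_mkcond big_option /= mxE [(_ *: c) j 0]mxE mxE; congr (_ + _).
  by apply: eq_bigr => k _; rewrite !mxE; case: ifP; rewrite ?mul0r ?mulr0 // mulrC.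
have mu_ge0 k : 0 <= mu k 0 by rewrite mxE; case: ifP.
have mu_cs k : mu k 0 * qslack x k = 0.
  by rewrite mxE; case: ifP => [/eqP ->|_]; rewrite ?mulr0 ?mul0r.
have lam0_gt0 : 0 < lam None.
  rewrite lt0r lam_ge0 andbT; apply/eqP => lam0.
  have mu0 : mu = 0.
    by apply: qgrad_slater slater mu_ge0 mu_cs _; rewrite -stat lam0 scale0r add0r.
  case: i0 Pi0 lam_i0_gt0 => [k /= /eqP k_act|]; last by rewrite lam0 ltxx.
  have := congr1 (fun v : 'cV[R]_K => v k 0) mu0.
  by rewrite !mxE k_act eqxx => ->; rewrite ltxx.
exists ((lam None)^-1 *: mu) => [k|].
  by rewrite [(_ *: mu) k 0]mxE -mulrA mu_cs mulr0 mulr_ge0 // invr_ge0 ltW.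
by rewrite -scalemxAr -[c](scalerK (lt0r_neq0 lam0_gt0)) -scalerDr stat scaler0.
Qed.

End ConcaveQuadraticKKT.

(** * The cone K, the bar gap and strong duality for (P_X) *)

Section RotatedCone.
Variable R : realType.

Lemma inK_pairingE (a1 a2 a3 b1 b2 b3 : R) :
  2 * b1 * a2 * (a1 * b1 + a2 * b2 + a3 * b3) =
  (b1 * a3 + b3 * a2) ^+ 2 + a2 ^+ 2 * (2 * b1 * b2 - b3 ^+ 2)
    + b1 ^+ 2 * (2 * a1 * a2 - a3 ^+ 2).
Proof. by ring. Qed.

Lemma inK_pairing_ge0 (a1 a2 a3 b1 b2 b3 : R) : inK a1 a2 a3 -> inK b1 b2 b3 ->
  0 <= a1 * b1 + a2 * b2 + a3 * b3.
Proof.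
move=> [a1_ge0 [a2_ge0 a3_le]] [b1_ge0 [b2_ge0 b3_le]].
have sqr_le0 (x : R) : x ^+ 2 <= 0 -> x = 0.
  by move=> x2_le0; apply/eqP; rewrite -sqrf_eq0 eq_le x2_le0 sqr_ge0.
have [a2_gt0|a2_le0] := ltrP 0 a2; last first.
  have a2_0 : a2 = 0 by lra.
  rewrite a2_0 (sqr_le0 a3) ?mul0r ?addr0 ?mulr_ge0 //.
  by move: a3_le; rewrite a2_0 mulr0.
have [b1_gt0|b1_le0] := ltrP 0 b1; last first.
  have b1_0 : b1 = 0 by lra.
  rewrite b1_0 (sqr_le0 b3) ?mulr0 ?add0r ?addr0 ?mulr_ge0 //.
  by move: b3_le; rewrite b1_0 mulr0 mul0r.
rewrite -(pmulr_rge0 _ (_ : 0 < 2 * b1 * a2)) ?mulr_gt0 // inK_pairingE.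
by rewrite !addr_ge0 ?sqr_ge0 ?mulr_ge0 ?sqr_ge0 ?subr_ge0.
Qed.

Lemma inK_pairing_eq0 (a1 a2 a3 b1 b2 b3 : R) : inK a1 a2 a3 -> inK b1 b2 b3 ->
  0 < a2 -> 0 < b1 -> a1 * b1 + a2 * b2 + a3 * b3 = 0 -> b3 ^+ 2 = 2 * b1 * b2.
Proof.
move=> [_ [_ a3_le]] [_ [_ b3_le]] a2_gt0 b1_gt0 pairing0.
have := inK_pairingE a1 a2 a3 b1 b2 b3; rewrite pairing0 mulr0.
have := sqr_ge0 (b1 * a3 + b3 * a2).
have : 0 <= b1 ^+ 2 * (2 * a1 * a2 - a3 ^+ 2) by rewrite mulr_ge0 ?sqr_ge0 // subr_ge0.
have : 0 < a2 ^+ 2 by rewrite exprn_gt0.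
nra.
Qed.

End RotatedCone.

Section BarGap.
Variable R : realFieldType.
Variables (U1 U2 Z : R * R -> R).

Definition bar_gap (x y : R * R) : R :=
  (y.1 - x.1) ^+ 2 + (y.2 - x.2) ^+ 2
  - ((U1 y - U1 x) * (y.1 - x.1) + (U2 y - U2 x) * (y.2 - x.2)) - (Z y - Z x) ^+ 2.

Lemma bar_gapC x y : bar_gap x y = bar_gap y x.
Proof. by rewrite /bar_gap; ring. Qed.

Lemma bar_gapxx x : bar_gap x x = 0.
Proof. by rewrite /bar_gap !subrr; ring. Qed.

Lemma bar_gap_interpolate (x1 x2 x3 : R * R) t : 0 <= t <= 1 ->
  x2.1 = (1 - t) * x1.1 + t * x3.1 -> x2.2 = (1 - t) * x1.2 + t * x3.2 ->
  0 <= bar_gap x1 x2 -> 0 <= bar_gap x2 x3 -> bar_gap x1 x3 = 0 ->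
  Z x2 = (1 - t) * Z x1 + t * Z x3.
Proof.
move=> /andP[t_ge0 t_le1] x2_1 x2_2 gap12 gap23 gap13.
pose e := (1 - t) * (Z x2 - Z x1) - t * (Z x3 - Z x2).
have e2E : e ^+ 2 = t * (1 - t) * bar_gap x1 x3
    - (1 - t) * bar_gap x1 x2 - t * bar_gap x2 x3.
  by rewrite /e /bar_gap x2_1 x2_2; ring.
have e2_le0 : e ^+ 2 <= 0.
  have := mulr_ge0 t_ge0 gap23; have : 0 <= 1 - t by rewrite subr_ge0.
  by move/mulr_ge0/(_ gap12); rewrite e2E gap13 mulr0 sub0r; lra.
have : e = 0 by apply/eqP; rewrite -sqrf_eq0 eq_le e2_le0 sqr_ge0.
by rewrite /e; lra.
Qed.

End BarGap.

Section EuclideanPlane.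
Variable R : realType.

Lemma edist_gt0 (x y : R * R) : x != y -> 0 < Defs.edist x y.
Proof.
case: x y => [x1 x2] [y1 y2] neq; rewrite sqrtr_gt0 lt0r !addr_ge0 ?sqr_ge0 // andbT.
by apply: contra neq; rewrite paddr_eq0 ?sqr_ge0 // !sqrf_eq0 !subr_eq0 xpair_eqE.
Qed.

Lemma lift3_interpolate (x1 x2 x3 : R * R) (h1 h2 h3 t : R) :
  x2.1 = (1 - t) * x1.1 + t * x3.1 -> x2.2 = (1 - t) * x1.2 + t * x3.2 ->
  h2 = (1 - t) * h1 + t * h3 ->
  lift3 x2 h2 = (1 - t) *: lift3 x1 h1 + t *: lift3 x3 h3.
Proof.
by move=> x2_1 x2_2 h2E; apply/rowP => -[[|[|[|//]]] j_lt3]; rewrite !mxE.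
Qed.

Lemma collinear3_interpolate (a c : 'rV[R]_3) t :
  collinear3 a ((1 - t) *: a + t *: c) c.
Proof.
exists a, (c - a), 0, t, 1; rewrite scale0r addr0 scale1r [a + (c - a)]addrC subrK.
by do 2!split=> //; rewrite scalerBl scale1r scalerBr addrA addrAC.
Qed.

End EuclideanPlane.

Section PrimalDual.
Variable R : realType.
Variables (n m : nat) (chi : 'I_n -> R * R) (chim chip : 'I_m -> R * R) (f : 'cV[R]_n).
Hypothesis lvec_gt0 : forall k, 0 < lvec chim chip k 0.
Local Notation lv := (lvec chim chip).
Local Notation B1 := (B1mx chi chim chip).
Local Notation B2 := (B2mx chi chim chip).
Local Notation D := (Dmx chi chim chip).
Local Notation PX_feasible := (PX_feasible chi chim chip f).
Local Notation PXd_feasible := (PXd_feasible chi chim chip).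

Lemma PXd_feasible_eq u1 u2 w t1 t2 t3 : PXd_feasible u1 u2 w t1 t2 t3 ->
  [/\ t1 = 2 *: lv, t2 = lv - B1 *m u1 - B2 *m u2 & t3 = - (D *m w)].
Proof.
move=> [_ [_ [t2E [t3E [t1E _]]]]]; split=> //.
  by rewrite -t2E addrAC !addrK.
by apply/eqP; rewrite -addr_eq0 t3E.
Qed.

Lemma PX_PXd_gap s q r u1 u2 w t1 t2 t3 :
  PX_feasible s q r -> PXd_feasible u1 u2 w t1 t2 t3 ->
  PX_obj chim chip s r - PXd_obj f w =
  \sum_k (r k 0 * t1 k 0 + s k 0 * t2 k 0 + q k 0 * t3 k 0).
Proof.
move=> [_ [_ [B1s [B2s [Dq _]]]]] /PXd_feasible_eq[-> -> ->].
have sB1 : \sum_k s k 0 * (B1 *m u1) k 0 = 0.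
  by rewrite sum_mul_mulmx B1s big1 // => i _; rewrite mxE mul0r.
have sB2 : \sum_k s k 0 * (B2 *m u2) k 0 = 0.
  by rewrite sum_mul_mulmx B2s big1 // => i _; rewrite mxE mul0r.
have qD : \sum_k q k 0 * (D *m w) k 0 = PXd_obj f w by rewrite sum_mul_mulmx Dq.
have -> : \sum_k (r k 0 * (2 *: lv) k 0 + s k 0 * (lv - B1 *m u1 - B2 *m u2) k 0
      + q k 0 * (- (D *m w)) k 0) =
    PX_obj chim chip s r - \sum_k s k 0 * (B1 *m u1) k 0
      - \sum_k s k 0 * (B2 *m u2) k 0 - \sum_k q k 0 * (D *m w) k 0.
  rewrite /PX_obj mulr_sumr -big_split -!sumrB.
  by apply: eq_bigr => k _; rewrite !mxE /=; ring.
by rewrite sB1 sB2 qD !subr0.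
Qed.

(* The dual as a concave quadratic program in x = (u1, u2, w): its k-th slack
   is 4 l_k t2_k - t3_k^2, the cone constraint with t1 = 2 l. *)
Let pack (v1 v2 vw : 'cV[R]_n) : 'cV[R]_(n + n + n) := col_mx (col_mx v1 v2) vw.
Let L : 'M[R]_m := diag_mx (4 *: lv^T).
Let A : 'M[R]_(m, n + n + n) := - (L *m row_mx (row_mx B1 B2) 0).
Let B : 'M[R]_(m, n + n + n) := row_mx 0 (- D).
Let c : 'cV[R]_(n + n + n) := col_mx 0 f.
Let slack := qslack (L *m lv) 0 A B.

Lemma slack_pack v1 v2 vw k : slack (pack v1 v2 vw) k =
  4 * lv k 0 * (lv - B1 *m v1 - B2 *m v2) k 0 - (- (D *m vw)) k 0 ^+ 2.
Proof.
rewrite /slack /qslack /pack /A /B /L add0r mulNmx -mulmxA !mul_row_col !mul0mx.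
rewrite addr0 add0r mulNmx -mulmxBr mul_diag_mx opprD addrA.
by rewrite !mxE.
Qed.

Lemma PXd_feasible_cone u1 u2 w t1 t2 t3 : PXd_feasible u1 u2 w t1 t2 t3 ->
  forall k, 0 <= 4 * lv k 0 * t2 k 0 - t3 k 0 ^+ 2.
Proof.
move=> feas k; have [t1E _ _] := PXd_feasible_eq feas.
have [_ [_ [_ [_ [_ /(_ k)[_ [_]]]]]]] := feas.
by rewrite t1E mxE; lra.
Qed.

Lemma PXd_feasible_slack u1 u2 w t1 t2 t3 :
  PXd_feasible u1 u2 w t1 t2 t3 -> forall k, 0 <= slack (pack u1 u2 w) k.
Proof.
move=> feas k; have [_ t2E t3E] := PXd_feasible_eq feas.
by rewrite slack_pack -t2E -t3E; apply: PXd_feasible_cone feas k.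
Qed.

Lemma slack_PXd_feasible v1 v2 vw : (forall k, 0 <= slack (pack v1 v2 vw) k) ->
  PXd_feasible v1 v2 vw (2 *: lv) (lv - B1 *m v1 - B2 *m v2) (- (D *m vw)).
Proof.
move=> slack_ge0.
have t2_ge0 k : 0 <= (lv - B1 *m v1 - B2 *m v2) k 0.
  have := slack_ge0 k; rewrite slack_pack => ge0.
  by rewrite -(pmulr_rge0 _ (_ : 0 < 4 * lv k 0)) ?mulr_gt0 //; nra.
split=> [k|]; first by rewrite mxE mulr_ge0 // ltW.
split=> //; split; first by rewrite addrAC !subrK.
split; first by rewrite addNr.
split=> // k; have := slack_ge0 k; rewrite slack_pack /inK [(2 *: lv) k 0]mxE.
by split; [rewrite mulr_ge0 // ltW | split=> //; lra].
Qed.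

Lemma obj_pack v1 v2 vw : (c^T *m pack v1 v2 vw) 0 0 = PXd_obj f vw.
Proof.
rewrite /c /pack tr_col_mx mul_row_col trmx0 mul0mx add0r mxE.
by apply: eq_bigr => i _; rewrite mxE.
Qed.

Lemma stationarity_pack (u1 u2 w : 'cV[R]_n) (nu : 'cV[R]_m) :
  c + (qgrad 0 A B (pack u1 u2 w))^T *m nu = 0 ->
  let s := \col_k (4 * lv k 0 * nu k 0) in
  let z := \col_k (2 * (- (D *m w)) k 0 * nu k 0) in
  [/\ B1^T *m s = 0, B2^T *m s = 0 & D^T *m z = - f].
Proof.
move=> stat s z.
have Bx : 0 + B *m pack u1 u2 w = - (D *m w).
  by rewrite /B /pack mul_row_col mul0mx !add0r mulNmx.
have Lnu : L *m nu = s by rewrite /L mul_diag_mx; apply/colP => k; rewrite !mxE.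
move: stat; rewrite tr_qgrad_mul Bx -/z /A /B raddfN /= trmx_mul tr_diag_mx -/L.
rewrite mulNmx -mulmxA Lnu !tr_row_mx !mul_col_mx !trmx0 !mul0mx raddfN /= mulNmx.
rewrite /c !opp_col_mx !add_col_mx !oppr0 !opprK !add0r addr0 -col_mx0.
move=> /eq_col_mx[]; rewrite -col_mx0 => /eq_col_mx[/eqP + /eqP].
rewrite !oppr_eq0 => /eqP-> /eqP-> /eqP; rewrite addrC addr_eq0.
by move/eqP.
Qed.

Lemma PXd_strong_duality u1 u2 w t1 t2 t3 :
  PXd_feasible u1 u2 w t1 t2 t3 ->
  (forall v1 v2 w1 e1 e2 e3, PXd_feasible v1 v2 w1 e1 e2 e3 ->
     PXd_obj f w1 <= PXd_obj f w) ->
  exists s q r, PX_feasible s q r /\ PX_obj chim chip s r = PXd_obj f w.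
Proof.
move=> feas w_opt; have [t1E t2E t3E] := PXd_feasible_eq feas.
have slater k : 0 < slack (pack 0 0 0) k.
  rewrite slack_pack !mulmx0 !subr0 oppr0 [X in _ - X ^+ 2]mxE expr2 mul0r subr0.
  by rewrite !mulr_gt0.
have x_opt y : (forall k, 0 <= slack y k) ->
    (c^T *m y) 0 0 <= (c^T *m pack u1 u2 w) 0 0.
  rewrite -[y]vsubmxK -[usubmx y]vsubmxK => /slack_PXd_feasible/w_opt.
  by rewrite !obj_pack.
have [nu nu_cs /stationarity_pack[B1s B2s Dz]] :=
  concave_quadratic_kkt slater (PXd_feasible_slack feas) x_opt.
rewrite -t3E in Dz.
have nu_ge0 k : 0 <= nu k 0 by case: (nu_cs k).
have l_neq0 k : lv k 0 != 0 by rewrite gt_eqF.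
set s' := \col_k _ in B1s B2s.
pose q' := - \col_k (2 * t3 k 0 * nu k 0).
pose r' := \col_k (t3 k 0 ^+ 2 * nu k 0 / (2 * lv k 0)).
have s'E k : s' k 0 = 4 * lv k 0 * nu k 0 by rewrite mxE.
have q'E k : q' k 0 = - (2 * t3 k 0 * nu k 0) by rewrite !mxE.
have r'E k : r' k 0 = t3 k 0 ^+ 2 * nu k 0 / (2 * lv k 0) by rewrite mxE.
have feas' : PX_feasible s' q' r'.
  have s'_ge0 k : 0 <= s' k 0 by rewrite s'E !mulr_ge0 // ltW.
  have r'_ge0 k : 0 <= r' k 0.
    by rewrite r'E divr_ge0 ?(mulr_ge0 (sqr_ge0 _)) ?mulr_ge0 // ltW.
  do 5!split=> //; first by rewrite mulmxN Dz opprK.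
  move=> k; do 2!split=> //; rewrite s'E q'E r'E.
  by rewrite le_eqVlt; apply/orP; left; apply/eqP; field.
exists s', q', r'; split=> //.
apply/eqP; rewrite -subr_eq0 (PX_PXd_gap feas' feas); apply/eqP/big1 => k _.
have := (nu_cs k).2; rewrite -/slack slack_pack -t2E -t3E => cs.
by rewrite t1E [(2 *: lv) k 0]mxE s'E q'E r'E; apply: etrans cs; field.
Qed.

Lemma PX_PXd_complementary_slackness s q r u1 u2 w t1 t2 t3 :
  PX_solves chi chim chip f s q r -> PXd_solves chi chim chip f u1 u2 w ->
  PXd_feasible u1 u2 w t1 t2 t3 ->
  forall k, r k 0 * t1 k 0 + s k 0 * t2 k 0 + q k 0 * t3 k 0 = 0.
Proof.
move=> [P_feas P_opt] [_ w_opt] feas.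
have [s' [q' [r' [feas' obj']]]] := PXd_strong_duality feas w_opt.
have term_ge0 k : 0 <= r k 0 * t1 k 0 + s k 0 * t2 k 0 + q k 0 * t3 k 0.
  have [_ [_ [_ [_ [_ Kp]]]]] := P_feas; have [_ [_ [_ [_ [_ Kd]]]]] := feas.
  exact: inK_pairing_ge0.
have gap0 : \sum_k (r k 0 * t1 k 0 + s k 0 * t2 k 0 + q k 0 * t3 k 0) = 0.
  apply/eqP; rewrite eq_le sumr_ge0 // andbT -(PX_PXd_gap P_feas feas) subr_le0 -obj'.
  exact: P_opt feas'.
by move=> k; apply: (psumr_eq0P (fun k _ => term_ge0 k) gap0).
Qed.

Lemma PX_PXd_tight s q r u1 u2 w t1 t2 t3 k :
  PX_solves chi chim chip f s q r -> PXd_solves chi chim chip f u1 u2 w ->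
  PXd_feasible u1 u2 w t1 t2 t3 -> s k 0 != 0 ->
  t3 k 0 ^+ 2 = 4 * lv k 0 * t2 k 0.
Proof.
move=> P_sol D_sol feas sk_neq0; have [t1E _ _] := PXd_feasible_eq feas.
have [[_ [_ [_ [_ [_ Kp]]]]] _] := P_sol; have [_ [_ [_ [_ [_ Kd]]]]] := feas.
have t1k : t1 k 0 = 2 * lv k 0 by rewrite t1E mxE.
have sk_gt0 : 0 < s k 0 by have [_ [sk_ge0 _]] := Kp k; rewrite lt0r sk_neq0.
have t1k_gt0 : 0 < t1 k 0 by rewrite t1k mulr_gt0.
have cs := PX_PXd_complementary_slackness P_sol D_sol feas k.
by rewrite (inK_pairing_eq0 (Kp k) (Kd k) sk_gt0 t1k_gt0 cs) t1k; ring.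
Qed.

Lemma extZ (a : R) (v : 'cV[R]_n) x : ext chi (a *: v) x = a * ext chi v x.
Proof. by rewrite /ext mulr_sumr; apply: eq_bigr => i _; rewrite mxE mulrCA. Qed.

Lemma Dmx_ext (w : 'cV[R]_n) j : (D *m w) j 0 = ext chi w (chip j) - ext chi w (chim j).
Proof. by rewrite mxE /ext -sumrB; apply: eq_bigr => i _; rewrite mxE mulrBl. Qed.

Lemma B1mx_ext (u : 'cV[R]_n) j : (B1 *m u) j 0 =
  (ext chi u (chip j) - ext chi u (chim j)) * ((chip j).1 - (chim j).1) / lv j 0.
Proof.
by rewrite mxE /ext -sumrB !mulr_suml; apply: eq_bigr => i _; rewrite mxE; ring.
Qed.

Lemma B2mx_ext (u : 'cV[R]_n) j : (B2 *m u) j 0 =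
  (ext chi u (chip j) - ext chi u (chim j)) * ((chip j).2 - (chim j).2) / lv j 0.
Proof.
by rewrite mxE /ext -sumrB !mulr_suml; apply: eq_bigr => i _; rewrite mxE; ring.
Qed.

Lemma bar_gap_PXd u1 u2 w t1 t2 t3 j : PXd_feasible u1 u2 w t1 t2 t3 ->
  4 * bar_gap (ext chi u1) (ext chi u2) (ext chi (2^-1 *: w)) (chim j) (chip j) =
  4 * lv j 0 * t2 j 0 - t3 j 0 ^+ 2.
Proof.
move=> /PXd_feasible_eq[_ -> ->].
have -> : (lv - B1 *m u1 - B2 *m u2) j 0 = lv j 0 - (B1 *m u1) j 0 - (B2 *m u2) j 0.
  by rewrite !mxE.
have l2 : lv j 0 ^+ 2 = ((chip j).1 - (chim j).1) ^+ 2 + ((chip j).2 - (chim j).2) ^+ 2.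
  by rewrite mxE sqr_sqrtr // addr_ge0 ?sqr_ge0.
rewrite [(- (D *m w)) j 0]mxE Dmx_ext B1mx_ext B2mx_ext /bar_gap !extZ -l2.
by field; rewrite gt_eqF.
Qed.

Lemma bar_gap_PXd_ge0 u1 u2 w t1 t2 t3 j : PXd_feasible u1 u2 w t1 t2 t3 ->
  0 <= bar_gap (ext chi u1) (ext chi u2) (ext chi (2^-1 *: w)) (chim j) (chip j).
Proof.
move=> feas; rewrite -(pmulr_rge0 _ (_ : 0 < 4)) // (bar_gap_PXd j feas).
exact: PXd_feasible_cone feas j.
Qed.

Lemma bar_gap_PX_PXd_eq0 s q r u1 u2 w k :
  PX_solves chi chim chip f s q r -> PXd_solves chi chim chip f u1 u2 w ->
  s k 0 != 0 ->
  bar_gap (ext chi u1) (ext chi u2) (ext chi (2^-1 *: w)) (chim k) (chip k) = 0.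
Proof.
move=> P_sol D_sol sk_neq0; have [[t1 [t2 [t3 feas]]] _] := D_sol.
have := bar_gap_PXd k feas; rewrite (PX_PXd_tight P_sol D_sol feas sk_neq0) subrr.
by move/eqP; rewrite mulf_eq0 pnatr_eq0 => /eqP.
Qed.

End PrimalDual.

Unset Implicit Arguments. Set Strict Implicit.

Theorem proposition6p2 (R : realType) (O : set (R * R)) (X : seq (R * R))
    (n m : nat) (chi : 'I_n -> (R * R)) (chim chip : 'I_m -> (R * R))
    (fX : (R * R) -> R)
    (x1 x2 x3 : R * R) (k : 'I_m)
    (s q r : 'cV[R]_m) (u1 u2 w : 'cV[R]_n) :
  admissible_setting O X chi chim chip ->
  x1 \in X -> x2 \in X -> x3 \in X ->
  (exists t : R, 0 <= t <= 1 /\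
     x2.1 = (1 - t) * x1.1 + t * x3.1 /\ x2.2 = (1 - t) * x1.2 + t * x3.2) ->
  PX_solves chi chim chip (\col_i fX (chi i)) s q r ->
  PXd_solves chi chim chip (\col_i fX (chi i)) u1 u2 w ->
  ((chim k = x1 /\ chip k = x3) \/ (chim k = x3 /\ chip k = x1)) ->
  s k 0 != 0 ->
  let z := ext chi ((2%:R)^-1 *: w) in
  collinear3 (lift3 x1 (z x1)) (lift3 x2 (z x2)) (lift3 x3 (z x3)).
Proof.
move=> adm x1X x2X x3X [t [t01 [x2_1 x2_2]]] P_sol D_sol k_x13 sk_neq0 z.
have [_ [_ [_ [_ [_ [_ [bars [_ bars_onto]]]]]]]] := adm.
have l_gt0 j : 0 < lvec chim chip j 0.
  by rewrite mxE edist_gt0 // eq_sym; case: (bars j) => _ [].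
have [[t1 [t2 [t3 feas]]] _] := D_sol.
set gap := bar_gap (ext chi u1) (ext chi u2) z.
have gap_ge0 a b : a \in X -> b \in X -> 0 <= gap a b.
  move=> aX bX; have [<-|ab] := eqVneq a b; first by rewrite /gap bar_gapxx.
  have [j [[<- <-]|[<- <-]]] := bars_onto a b aX bX ab; last rewrite /gap bar_gapC;
  by have := bar_gap_PXd_ge0 l_gt0 j feas.
have gap13 : gap x1 x3 = 0.
  have := bar_gap_PX_PXd_eq0 l_gt0 P_sol D_sol sk_neq0.
  by case: k_x13 => -[-> ->] //; rewrite bar_gapC.
have z2 := bar_gap_interpolate t01 x2_1 x2_2 (gap_ge0 _ _ x1X x2X)
  (gap_ge0 _ _ x2X x3X) gap13.
by rewrite (lift3_interpolate x2_1 x2_2 z2); apply: collinear3_interpolate.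
Qed.
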